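(* Consider any fair, well-formed execution of COP as described in the context (with $S$ correct or Byzantine), and for each client $C_i$ let $\pi_i$ be the sequence defined in the context. For any clients $C_i,C_j$ and any operation $o\in\pi_i\cap\pi_j$, we have $\pi_i|^o=\pi_j|^o$, where $\pi|^o$ denotes the prefix of $\pi$ ending with $o$.
   Context: System model. Clients $C_1,\dots,C_n$ and server $S$ in an asynchronous system, each client connected to $S$ by a reliable FIFO channel; clients are correct; $S$ is correct or Byzantine (may send arbitrary messages). Executions are fair and well-formed. Functionality. $F$ is deterministic over states $\mathcal{S}$, operations $\mathcal{O}$, responses $\mathcal{R}$: $F(s,o)=(s',r)$, extended to sequences by applying operations in order. $\mathrm{commute}_F(s,\rho_1,\rho_2)$ is true iff every interleaving of sequences $\rho_1,\rho_2$ (preserving each one's internal order) executed from $s$ yields the same final state and the same respective responses. Cryptography (ideal). $\mathrm{hash}$ is ideal collision-free; $\mathrm{sign}_i$ is invocable only by $C_i$ and $\mathrm{verify}_i(\phi,m)$ is true iff $C_i$ previously executed $\mathrm{sign}_i(m)$ obtaining $\phi$. $\|$ is concatenation. COP client $C_i$. State: $u$ (initially $\bot$); $c$ (initially $0$); map $H$ with $H[0]=\mathrm{null}$; map $Z$ to $\{\mathrm{success},\mathrm{abort}\}$; state $s$ (initially $s_0$). (1) On invocation of $o$: $u\leftarrow o$, send $\langle\mathrm{invoke},o,c,\mathrm{sign}_i(\mathrm{invoke}\|o\|i)\rangle$ to $S$. (2) On $\langle\mathrm{reply},\omega\rangle$: $\gamma,\mu\leftarrow\langle\rangle$. For $k=1,\dots,\mathrm{length}(\omega)$: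 $(o,j,\tau)=\omega[k]$, $l=c+k$; halt if $\mathrm{verify}_j(\tau,\mathrm{invoke}\|o\|j)$ fails; if $H[l]$ undefined set $H[l]\leftarrow\mathrm{hash}(H[l-1]\|o\|l\|j)$, else halt if $H[l]\neq\mathrm{hash}(H[l-1]\|o\|l\|j)$; if $j=i$ and $Z[l]=\mathrm{success}$ append $o$ to $\mu$, else if $j\neq i$ append $o$ to $\gamma$. Halt if $\omega$ is empty or its last entry has operation $\neq u$ or index $\neq i$. $(a,r)\leftarrow F(s,\mu)$. If $\mathrm{commute}_F(a,\langle u\rangle,\gamma)$: $(a,r)\leftarrow F(a,u)$, $Z[l]\leftarrow\mathrm{success}$; else $r\leftarrow\bot$, $Z[l]\leftarrow\mathrm{abort}$. Send $\langle\mathrm{commit},u,l,H[l],Z[l],\mathrm{sign}_i(\mathrm{commit}\|u\|l\|H[l]\|Z[l])\rangle$ to $S$, set $u\leftarrow\bot$, output $r$. (3) On $\langle\mathrm{broadcast},o,q,h,z,\phi,j\rangle$: halt unless $q=c+1$ and $\mathrm{verify}_j(\phi,\mathrm{commit}\|o\|q\|h\|z)$; if $H[q]$ undefined set $H[q]\leftarrow\mathrm{hash}(H[q-1]\|o\|q\|j)$; halt if $h\neq H[q]$; if $z=\mathrm{success}$, $(s,\cdot)\leftarrow F(s,o)$; $c\leftarrow c+1$. COP server $S$ (when correct). State $t=0$, $b=0$, maps $I,O$ empty. On $\langle\mathrm{invoke},o,c,\tau\rangle$ from $C_i$: $t\leftarrow t+1$, $I[t]\leftarrow(o,i,\tau)$,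 send $\langle\mathrm{reply},\langle I[c+1],\dots,I[t]\rangle\rangle$ to $C_i$. On $\langle\mathrm{commit},o,q,h,z,\phi\rangle$ from $C_i$: $O[q]\leftarrow(o,h,z,\phi,i)$; while $O[b+1]$ defined: $b\leftarrow b+1$, send $\langle\mathrm{broadcast},o',b,h',z',\phi',j\rangle$ to all clients where $(o',h',z',\phi',j)=O[b]$. Terminology. $C_i$ commits $o$ when it issues the commit signature in step (2); the value $l$ there is the sequence number of $o$. A client confirms $o$ when it processes a broadcast message for $o$ in step (3) passing all checks. Definition of $\pi_i$: let $o$ be the operation committed by $C_i$ with the highest sequence number among those operations of $C_i$ that have been confirmed by some client $C_k$ (possibly $C_k=C_i$); let $\alpha_i$ be the sequence of operations confirmed by $C_k$ up to and including $o$; let $\beta_i$ be the sequence of operations committed by $C_i$ with sequence number higher than that of $o$, in order of sequence number; $\pi_i=\alpha_i\circ\beta_i$ (concatenation). *)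

From HB Require Import structures.
From Stdlib Require Import ClassicalEpsilon.
From mathcomp Require Import all_boot.
Set Implicit Arguments.
Unset Strict Implicit.
Unset Printing Implicit Defensive.

Definition pdec (P : Prop) : bool :=
  if excluded_middle_informative P then true else false.

Section COP.
Variables (St : Type) (O : eqType) (Rsp : Type) (F : St -> O -> St * Rsp)
          (s0 : St) (n : nat).

Fixpoint Fseq (s : St) (rho : seq O) : St * seq Rsp :=
  match rho with
  | [::] => (s, [::])
  | o :: r => let (s1, x) := F s o in
              let (sf, xs) := Fseq s1 r in (sf, x :: xs)
  end.

(* Running a tagged interleaving (tag true = from rho1, false = from rho2). *)
Fixpoint runT (s : St) (w : seq (bool * O)) : St * seq (bool * Rsp) :=
  match w with
  | [::] => (s, [::])
  | (b, o) :: w' => let (s1, x) := F s o in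
                    let (sf, xs) := runT s1 w' in (sf, (b, x) :: xs)
  end.

Definition interleaving (w : seq (bool * O)) (r1 r2 : seq O) : Prop :=
  [seq x.2 | x <- w & x.1] = r1 /\ [seq x.2 | x <- w & ~~ x.1] = r2.

Definition resps (b : bool) (rs : seq (bool * Rsp)) : seq Rsp :=
  [seq x.2 | x <- rs & x.1 == b].

Definition commuteF (s : St) (r1 r2 : seq O) : Prop :=
  forall w w', interleaving w r1 r2 -> interleaving w' r1 r2 ->
    (runT s w).1 = (runT s w').1 /\
    resps true (runT s w).2 = resps true (runT s w').2 /\
    resps false (runT s w).2 = resps false (runT s w').2.

(* Ideal collision-free hash: hash(h || o || l || j) is a free term. *)
Inductive hval : Type := HNull | HNode of hval & O & nat & nat.
Inductive zval : Type := Zsucc | Zabort.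
(* Signed messages: invoke||o||i  and  commit||o||l||h||z *)
Inductive smsg : Type := SInv of O & nat | SCom of O & nat & hval & zval.
(* Ideal signatures: sign_i(m) = (i, m); the log records all signatures made. *)
Definition sigv := (nat * smsg)%type.
Definition verify (log : seq sigv) (j : nat) (phi : sigv) (m : smsg) : Prop :=
  phi = (j, m) /\ List.In (j, m) log.

Record cstate := CState {
  cu : option O; cc : nat; cH : nat -> option hval; cZ : nat -> option zval;
  cs : St; chalt : bool }.

Definition cinit : cstate :=
  CState None 0 (fun l => if l == 0 then Some HNull else None) (fun _ => None) s0 false.

Definition upd (T : Type) (f : nat -> T) (l : nat) (v : T) : nat -> T :=
  fun l' => if l' == l then v else f l'.

(* Global state: client states + ghost logs (signatures issued, operations
   invoked, commits (o,l) per client in issue order, confirmations per client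
   in order). *)
Record gstate := GState {
  gcl : nat -> cstate; glog : seq sigv; ginv : seq O;
  gcom : nat -> seq (O * nat); gconf : nat -> seq O }.

Definition ginit : gstate :=
  GState (fun _ => cinit) [::] [::] (fun _ => [::]) (fun _ => [::]).

Definition set_client (g : gstate) (i : nat) (C : cstate) : gstate :=
  GState (upd (gcl g) i C) (glog g) (ginv g) (gcom g) (gconf g).

Definition halted (C : cstate) : cstate :=
  CState (cu C) (cc C) (cH C) (cZ C) (cs C) true.

Definition halt (g : gstate) (i : nat) : gstate := set_client g i (halted (gcl g i)).

(* The loop of step (2); None = halt.  (H[l-1] undefined is unreachable.) *)
Fixpoint scan (i : nat) (log : seq sigv) (H : nat -> option hval)
  (Z : nat -> option zval) (l : nat) (om : seq (O * nat * sigv))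
  (gam mu : seq O) : option ((nat -> option hval) * seq O * seq O) :=
  match om with
  | [::] => Some (H, gam, mu)
  | ((o, j), tau) :: om' =>
    if ~~ pdec (verify log j tau (SInv o j)) then None else
    match H l.-1 with
    | None => None
    | Some hp =>
      let h := HNode hp o l j in
      let H'opt := match H l with
                   | None => Some (upd H l (Some h))
                   | Some hl => if pdec (hl = h) then Some H else None
                   end in
      match H'opt with
      | None => None
      | Some H' =>
        let gm := if (j == i) && pdec (Z l = Some Zsucc) then (gam, rcons mu o)
                  else if j != i then (rcons gam o, mu) else (gam, mu) in
        scan i log H' Z l.+1 om' gm.1 gm.2
      end
    end
  end.

Definition on_reply (i : nat) (om : seq (O * nat * sigv)) (g : gstate) : gstate :=
  let C := gcl g i in
  match scan i (glog g) (cH C) (cZ C) (cc C).+1 om [::] [::] with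
  | None => halt g i
  | Some (H, gam, mu) =>
    match rev om with
    | [::] => halt g i
    | ((ol, jl), _) :: _ =>
      match cu C with
      | None => halt g i
      | Some u =>
        if (ol != u) || (jl != i) then halt g i else
        let l := cc C + size om in
        let a := (Fseq (cs C) mu).1 in
        let z := if pdec (commuteF a [:: u] gam) then Zsucc else Zabort in
        match H l with
        | None => halt g i (* unreachable *)
        | Some hl =>
          GState (upd (gcl g) i (CState None (cc C) H (upd (cZ C) l (Some z)) (cs C) false))
                 (rcons (glog g) (i, SCom u l hl z)) (ginv g)
                 (upd (gcom g) i (rcons (gcom g i) (u, l))) (gconf g)
        end
      end
    end
  end.

Definition on_bcast (i : nat) (o : O) (q : nat) (h : hval) (z : zval)
  (phi : sigv) (j : nat) (g : gstate) : gstate :=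
  let C := gcl g i in
  if ~~ ((q == (cc C).+1) && pdec (verify (glog g) j phi (SCom o q h z)))
  then halt g i else
  let Hopt := match cH C q with
              | Some _ => Some (cH C)
              | None => match cH C q.-1 with
                        | Some hp => Some (upd (cH C) q (Some (HNode hp o q j)))
                        | None => None (* unreachable *)
                        end
              end in
  match Hopt with
  | None => halt g i
  | Some H =>
    if ~~ pdec (H q = Some h) then halt g i else
    let s' := match z with Zsucc => (F (cs C) o).1 | Zabort => cs C end in
    GState (upd (gcl g) i (CState (cu C) (cc C).+1 H (cZ C) s' false))
           (glog g) (ginv g) (gcom g) (upd (gconf g) i (rcons (gconf g i) o))
  end.

(* Clients 0..n-1 are correct; the server is arbitrary
   (Byzantine), so any message may be delivered to any client at any time;
   a correct server is a special case.  Well-formedness: a client invokes only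
   when it has no pending operation; operations are unique (never invoked
   twice). *)
Inductive step : gstate -> gstate -> Prop :=
| StInvoke g i o : i < n -> ~~ chalt (gcl g i) -> cu (gcl g i) = None ->
    o \notin ginv g ->
    step g (GState (upd (gcl g) i
                      (CState (Some o) (cc (gcl g i)) (cH (gcl g i)) (cZ (gcl g i))
                              (cs (gcl g i)) false))
                   (rcons (glog g) (i, SInv o i)) (rcons (ginv g) o)
                   (gcom g) (gconf g))
| StReply g i om : i < n -> ~~ chalt (gcl g i) -> step g (on_reply i om g)
| StBcast g i o q h z phi j : i < n -> ~~ chalt (gcl g i) ->
    step g (on_bcast i o q h z phi j g).

(* States reached by finite executions (prefixes of executions). *)
Inductive reach : gstate -> Prop :=
| reach0 : reach ginit
| reachS g g' : reach g -> step g g' -> reach g'.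

Definition sortl (s : seq (O * nat)) : seq (O * nat) :=
  sort (fun x y : O * nat => x.2 <= y.2) s.

Definition conf_by_some (g : gstate) (o : O) : Prop :=
  exists k, k < n /\ o \in gconf g k.

Definition IsPi (g : gstate) (i : nat) (pi : seq O) : Prop :=
  ((forall x, x \in gcom g i -> ~ conf_by_some g x.1) /\
     pi = map fst (sortl (gcom g i)))
  \/
  (exists (o : O) (l k : nat),
     (o, l) \in gcom g i /\ k < n /\ o \in gconf g k /\
     (forall x, x \in gcom g i -> conf_by_some g x.1 -> x.2 <= l) /\
     pi = take (index o (gconf g k)).+1 (gconf g k)
          ++ map fst (sortl [seq x <- gcom g i | l < x.2])).

End COP.

(* pi|^o : prefix of pi ending with (the first occurrence of) o. *)
Definition prefix_upto (O : eqType) (o : O) (pi : seq O) : seq O :=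
  take (index o pi).+1 pi.

From HB Require Import structures.
From Stdlib Require Import ClassicalEpsilon.
From mathcomp Require Import all_boot.
Set Implicit Arguments.
Unset Strict Implicit.
Unset Printing Implicit Defensive.

(* The hash values signed in commit messages are ideal hash chains, so the
   chain h signed for an operation o at sequence number l records the whole
   history of o (hval_ops h).  An invariant of reachable states shows that a
   client that has confirmed o has confirmed exactly that history up to o, and
   that each operation carries at most one commit signature, issued by its
   invoker.  So all confirmed prefixes ending with o coincide.  If instead o
   lies in the unconfirmed tail beta_i of pi_i, nobody has confirmed o, so o also
   lies in beta_j; then C_i and C_j both committed o, hence i = j, and pi_i is
   uniquely determined. *)

Lemma pdecP (P : Prop) : reflect P (pdec P).
Proof. by rewrite /pdec; case: excluded_middle_informative => H; constructor. Qed.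

Lemma In_rcons (T : Type) (s : seq T) a x :
  List.In x (rcons s a) <-> List.In x s \/ x = a.
Proof.
elim: s => [|b s IH] /=; first by split; [case=> // ->; right | case=> // ->; left].
by rewrite IH; tauto.
Qed.

Lemma prefix_upto_cat (T : eqType) (x : T) (s1 s2 : seq T) :
  x \in s1 -> prefix_upto x (s1 ++ s2) = prefix_upto x s1.
Proof. by move=> xs1; rewrite /prefix_upto index_cat xs1 takel_cat // index_mem. Qed.

Lemma prefix_upto_prefix (T : eqType) (x y : T) (s : seq T) :
  x \in prefix_upto y s -> prefix_upto x (prefix_upto y s) = prefix_upto x s.
Proof.
rewrite /prefix_upto => xin.
have Eidx : index x (take (index y s).+1 s) = index x s.
  by rewrite -{3}(cat_take_drop (index y s).+1 s) index_cat xin.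
by rewrite Eidx take_takel // index_ltn.
Qed.

Section Invariant.
Variables (St : Type) (O : eqType) (Rsp : Type) (F : St -> O -> St * Rsp)
          (s0 : St) (n : nat).

Fixpoint hval_ops (h : hval O) : seq O :=
  match h with HNull => [::] | HNode hp o _ _ => rcons (hval_ops hp) o end.

Definition hash_chained (H : nat -> option (hval O)) : Prop :=
  forall q h, H q.+1 = Some h -> exists hp o j, h = HNode hp o q.+1 j /\ H q = Some hp.

Definition hash_ext (H H' : nat -> option (hval O)) : Prop :=
  forall q h, H q = Some h -> H' q = Some h.

Lemma hash_ext_trans H1 H2 H3 : hash_ext H1 H2 -> hash_ext H2 H3 -> hash_ext H1 H3.
Proof. by move=> e12 e23 q h /e12 /e23. Qed.

Lemma hash_upd_fresh H l hp o j :
  hash_chained H -> H l.-1 = Some hp -> H l = None ->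
  hash_ext H (upd H l (Some (HNode hp o l j))) /\
  hash_chained (upd H l (Some (HNode hp o l j))).
Proof.
move=> ch Hl1 Hl; split; first by move=> q h; rewrite /upd; case: eqP => // ->; rewrite Hl.
move=> q h; rewrite /upd; case: (eqVneq q.+1 l) => [El [<-]|_].
  by exists hp, o, j; rewrite -El ltn_eqF // -Hl1 -El.
move=> /ch [hp' [o' [j' [-> Hq]]]]; exists hp', o', j'; split => //.
by case: eqP => // El; rewrite El Hl in Hq.
Qed.

Lemma scan_hash i log Z (om : seq (O * nat * sigv O)) :
  forall H l gam mu H' gam' mu',
  scan i log H Z l om gam mu = Some (H', gam', mu') -> hash_chained H ->
  [/\ hash_ext H H', hash_chained H' & forall x0 k, k < size om -> exists hp,
     H' (l + k) = Some (HNode hp (nth x0 om k).1.1 (l + k) (nth x0 om k).1.2)].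
Proof.
elim: om => [|[[o j] tau] om IH] H l gam mu H' gam' mu' /=.
  by case=> <- _ _ ch; split.
case: pdec => //=; case Hl1: (H l.-1) => [hp|] // Escan ch.
suff step H1 gm : hash_ext H H1 -> hash_chained H1 -> H1 l = Some (HNode hp o l j) ->
    scan i log H1 Z l.+1 om gm.1 gm.2 = Some (H', gam', mu') ->
    [/\ hash_ext H H', hash_chained H' & forall x0 k, k < (size om).+1 -> exists hp,
     H' (l + k) = Some (HNode hp (nth x0 (((o, j), tau) :: om) k).1.1 (l + k)
                        (nth x0 (((o, j), tau) :: om) k).1.2)].
  move: Escan; case Hl: (H l) => [hl|].
    by case: pdecP => // Ehl; subst hl => /step; apply.
  have [e c] := hash_upd_fresh o j ch Hl1 Hl.
  by move/step; apply => //; rewrite /upd eqxx.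
move=> e1 c1 h1 /IH [] // e2 c2 hs2; split => //; first exact: hash_ext_trans e2.
move=> x0 [|k] /=; first by rewrite addn0; exists hp; apply: e2.
by rewrite ltnS => /(hs2 x0); rewrite addSnnS.
Qed.

(* The heart of the argument is inv_conf_signed: a confirmed prefix of length
   p+1 is the history recorded in a commit signed with sequence number p+1. *)
Record Inv (g : gstate St O) : Prop := {
  inv_chained : forall k, hash_chained (cH (gcl g k));
  inv_head : forall k, exists h,
    cH (gcl g k) (cc (gcl g k)) = Some h /\ hval_ops h = gconf g k;
  inv_size_conf : forall k, size (gconf g k) = cc (gcl g k);
  inv_commit_hash : forall c o l h z, List.In (c, SCom o l h z) (glog g) ->
    [/\ cH (gcl g c) l = Some h, exists hp, h = HNode hp o l c & o \in ginv g];
  inv_commit_uniq : forall c o l h z c' l' h' z',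
    List.In (c, SCom o l h z) (glog g) -> List.In (c', SCom o l' h' z') (glog g) ->
    [/\ c = c', l = l' & h = h'];
  inv_pending : forall c u, cu (gcl g c) = Some u ->
    [/\ u \in ginv g, forall c' l h z, ~ List.In (c', SCom u l h z) (glog g)
      & forall c', cu (gcl g c') = Some u -> c' = c];
  inv_commit_signed : forall i x, x \in gcom g i ->
    exists h z, List.In (i, SCom x.1 x.2 h z) (glog g);
  inv_conf_signed : forall k p x0, p < size (gconf g k) -> exists c h z,
    List.In (c, SCom (nth x0 (gconf g k) p) p.+1 h z) (glog g) /\
    take p.+1 (gconf g k) = hval_ops h
}.

Lemma Inv_init : Inv (@ginit St O s0).
Proof.
constructor => //=.
all: try by move=> k; exists (HNull O).
all: try by move=> k [].
all: by move=> k q h.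
Qed.

Lemma Inv_halt g k : Inv g -> Inv (halt g k).
Proof.
have [Eh Ec Eu] : [/\ forall k', cH (gcl (halt g k) k') = cH (gcl g k'),
    forall k', cc (gcl (halt g k) k') = cc (gcl g k')
  & forall k', cu (gcl (halt g k) k') = cu (gcl g k')].
  by split=> k'; rewrite /= /upd; case: eqP => // ->.
case=> ch hd sz sg uq pd cs cf; constructor => //=.
- by move=> k'; rewrite Eh.
- by move=> k'; rewrite Eh Ec.
- by move=> k'; rewrite Ec.
- by move=> c o l h z /sg; rewrite Eh.
- by move=> c u; rewrite Eu => /pd [? ? uq']; split => // c'; rewrite Eu; apply: uq'.
Qed.

Lemma In_rcons_SInv (log : seq (sigv O)) c o l h z i o' :
  List.In (c, SCom o l h z) (rcons log (i, SInv o' i)) -> List.In (c, SCom o l h z) log.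
Proof. by case/In_rcons. Qed.

Lemma Inv_invoke g i o : Inv g -> cu (gcl g i) = None -> o \notin ginv g ->
  Inv (GState (upd (gcl g) i (CState (Some o) (cc (gcl g i)) (cH (gcl g i))
                   (cZ (gcl g i)) (cs (gcl g i)) false))
              (rcons (glog g) (i, SInv o i)) (rcons (ginv g) o) (gcom g) (gconf g)).
Proof.
case=> ch hd sz sg uq pd cs cf cu0 onew.
set C' := CState _ _ _ _ _ _.
have [Eh Ec] : (forall k, cH (upd (gcl g) i C' k) = cH (gcl g k)) /\
               (forall k, cc (upd (gcl g) i C' k) = cc (gcl g k)).
  by split=> k; rewrite /upd; case: eqP => // ->.
constructor => /=.
- by move=> k; rewrite Eh.
- by move=> k; rewrite Eh Ec.
- by move=> k; rewrite Ec.
- move=> c o0 l h z /In_rcons_SInv /sg [H1 H2 H3]; rewrite Eh; split => //.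
  by rewrite mem_rcons inE H3 orbT.
- by move=> c o0 l h z c' l' h' z' /In_rcons_SInv H1 /In_rcons_SInv /(uq _ _ _ _ _ _ _ _ _ H1).
- move=> c u; rewrite {1}/upd; case: eqP => [->|_].
    move=> /= [<-]; split; first by rewrite mem_rcons mem_head.
      by move=> c' l h z /In_rcons_SInv /sg [_ _ oin]; rewrite oin in onew.
    by move=> c'; rewrite /upd; case: eqP => // _ /pd [oin _ _]; rewrite oin in onew.
  move=> /pd [H1 H2 H3]; split; first by rewrite mem_rcons inE H1 orbT.
    by move=> c' l h z /In_rcons_SInv /H2.
  move=> c'; rewrite /upd; case: eqP => [_ /= [E]|_ /H3 //].
  by rewrite E H1 in onew.
- by move=> i0 x /cs [h [z H]]; exists h, z; apply/In_rcons; left.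
- move=> k p x0 /(cf k p x0) [c [h [z [H1 H2]]]]; exists c, h, z; split => //.
  by apply/In_rcons; left.
Qed.

Lemma Inv_commit g i u H Z s l hp z :
  Inv g -> cu (gcl g i) = Some u -> hash_ext (cH (gcl g i)) H -> hash_chained H ->
  H l = Some (HNode hp u l i) ->
  Inv (GState (upd (gcl g) i (CState None (cc (gcl g i)) H Z s false))
              (rcons (glog g) (i, SCom u l (HNode hp u l i) z)) (ginv g)
              (upd (gcom g) i (rcons (gcom g i) (u, l))) (gconf g)).
Proof.
case=> ch hd sz sg uq pd cs cf cui ext chH Hl.
set C' := CState _ _ _ _ _ _.
have Eh k : cH (upd (gcl g) i C' k) = if k == i then H else cH (gcl g k).
  by rewrite /upd; case: eqP.
have Ec k : cc (upd (gcl g) i C' k) = cc (gcl g k).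
  by rewrite /upd; case: eqP => // ->.
have Eu k : cu (upd (gcl g) i C' k) = if k == i then None else cu (gcl g k).
  by rewrite /upd; case: eqP.
have [uinv unsigned upend] := pd i u cui.
constructor => /=.
- by move=> k; rewrite Eh; case: eqP => _; [exact: chH | exact: ch].
- move=> k; rewrite Eh Ec; case: eqP => [->|_] //.
  by have [hc [H1 H2]] := hd i; exists hc; split => //; apply: ext.
- by move=> k; rewrite Ec.
- move=> c o l0 h z0 /In_rcons [/sg [H1 H2 H3]|].
    by rewrite Eh; split => //; case: eqP => [E|//]; apply: ext; rewrite -E.
  by case=> -> -> -> -> _; rewrite Eh eqxx; split => //; exists hp.
- move=> c o l0 h z0 c' l' h' z' /In_rcons [H1|E1] /In_rcons [H2|E2].
  + exact: uq H1 H2.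
  + by case: E2 => _ E _ _ _; rewrite E in H1; case: (unsigned _ _ _ _ H1).
  + by case: E1 => _ E _ _ _; rewrite E in H2; case: (unsigned _ _ _ _ H2).
  + by move: E1 E2 => [-> -> -> -> _] [-> -> -> _].
- move=> c u'; rewrite Eu; case: eqP => // ci cuc; have [H1 H2 H3] := pd _ _ cuc; split => //.
    move=> c' l0 h z0 /In_rcons [/H2 //|[_ E _ _ _]].
    by subst u'; apply: ci; apply: upend.
  by move=> c'; rewrite Eu; case: eqP => // _ /H3.
- move=> i0 x; rewrite /upd; case: eqP => [->|_].
    rewrite mem_rcons inE => /orP [/eqP ->|/cs [h [z0 H1]]].
      by exists (HNode hp u l i), z; apply/In_rcons; right.
    by exists h, z0; apply/In_rcons; left.
  by move=> /cs [h [z0 H1]]; exists h, z0; apply/In_rcons; left.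
- move=> k p x0 /(cf k p x0) [c [h [z0 [H1 H2]]]]; exists c, h, z0; split => //.
  by apply/In_rcons; left.
Qed.

Lemma Inv_reply g i om : Inv g -> Inv (on_reply F i om g).
Proof.
move=> I; rewrite /on_reply.
case Esc: (scan _ _ _ _ _ _ _ _) => [[[H gam] mu]|]; last exact: Inv_halt.
case Erev: (rev om) => [|[[ol jl] t] r]; first exact: Inv_halt.
case Ecu: (cu (gcl g i)) => [u|]; last exact: Inv_halt.
case: ifP => [_|/norP [/negbNE/eqP Eo /negbNE/eqP Ej]]; first exact: Inv_halt.
subst ol jl.
have [ext chH Hnth] := scan_hash Esc (inv_chained I (k := i)).
have Eom : om = rcons (rev r) ((u, i), t) by rewrite -(revK om) Erev rev_cons.
set l := cc (gcl g i) + size om.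
(* The last entry of the reply is C_i's own pending operation u. *)
have [hp Hl] : exists hp, H l = Some (HNode hp u l i).
  have := Hnth ((u, i), t) (size r).
  by rewrite /l Eom size_rcons size_rev ltnSn nth_rcons size_rev ltnn eqxx addSnnS; apply.
by rewrite Hl; apply: Inv_commit.
Qed.

Lemma Inv_confirm g i o h z j H s :
  Inv g -> List.In (j, SCom o (cc (gcl g i)).+1 h z) (glog g) ->
  hash_ext (cH (gcl g i)) H -> hash_chained H -> H (cc (gcl g i)).+1 = Some h ->
  Inv (GState (upd (gcl g) i
                 (CState (cu (gcl g i)) (cc (gcl g i)).+1 H (cZ (gcl g i)) s false))
              (glog g) (ginv g) (gcom g) (upd (gconf g) i (rcons (gconf g i) o))).
Proof.
case=> ch hd sz sg uq pd cs cf signed ext chH Hq.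
have [_ [hp' Eh'] _] := sg _ _ _ _ _ signed.
have [hc [Hc Hops]] := hd i.
have Eops : hval_ops h = rcons (gconf g i) o.
  have [hp [o' [j' [Eh Hcc]]]] := chH _ _ Hq.
  move: Eh Hcc; rewrite Eh' (ext _ _ Hc) => -[-> _ _] [<-].
  by rewrite /= Hops.
set C' := CState _ _ _ _ _ _.
have Eh k : cH (upd (gcl g) i C' k) = if k == i then H else cH (gcl g k).
  by rewrite /upd; case: eqP.
have Ec k : cc (upd (gcl g) i C' k) = if k == i then (cc (gcl g i)).+1 else cc (gcl g k).
  by rewrite /upd; case: eqP.
have Eu k : cu (upd (gcl g) i C' k) = cu (gcl g k).
  by rewrite /upd; case: eqP => // ->.
constructor => /=.
- by move=> k; rewrite Eh; case: eqP => _; [exact: chH | exact: ch].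
- by move=> k; rewrite Eh Ec /upd; case: eqP => _ //; exists h.
- by move=> k; rewrite Ec /upd; case: eqP => _ //; rewrite size_rcons sz.
- move=> c o0 l h0 z0 /sg [H1 H2 H3]; rewrite Eh; split => //.
  by case: eqP => [E|//]; apply: ext; rewrite -E.
- exact: uq.
- by move=> c u; rewrite Eu => /pd [H1 H2 H3]; split => // c'; rewrite Eu; apply: H3.
- exact: cs.
- move=> k p x0; rewrite /upd; case: eqP => [_|_] /=; last exact: cf.
  rewrite size_rcons ltnS leq_eqVlt => /orP [/eqP Ep|Hp].
    exists j, h, z; rewrite Ep nth_rcons ltnn eqxx sz; split => //.
    by rewrite take_oversize ?size_rcons ?sz.
  have [c [h0 [z0 [H1 H2]]]] := cf i p x0 Hp.
  by exists c, h0, z0; rewrite nth_rcons Hp -cats1 takel_cat.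
Qed.

Lemma Inv_bcast g i o q h z phi j : Inv g -> Inv (on_bcast F i o q h z phi j g).
Proof.
move=> I; rewrite /on_bcast.
case: ifP => [_|/negbFE/andP [/eqP Eq /pdecP [_ signed]]]; first exact: Inv_halt.
rewrite Eq in signed.
suff confirm H s : hash_ext (cH (gcl g i)) H -> hash_chained H ->
  Inv (if ~~ pdec (H q = Some h) then halt g i else
       GState (upd (gcl g) i
                (CState (cu (gcl g i)) (cc (gcl g i)).+1 H (cZ (gcl g i)) s false))
              (glog g) (ginv g) (gcom g) (upd (gconf g) i (rcons (gconf g i) o))).
  case Hq: (cH (gcl g i) q) => [hq|]; first by apply: confirm => //; apply: (inv_chained I).
  case Hq1: (cH (gcl g i) q.-1) => [hp|]; last exact: Inv_halt.
  by have [] := hash_upd_fresh o j (inv_chained I (k := i)) Hq1 Hq; apply: confirm.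
move=> ext chH; case: pdecP => [Hh|_]; last exact: Inv_halt.
by rewrite Eq in Hh; apply: Inv_confirm signed ext chH Hh.
Qed.

Lemma Inv_reach g : reach F s0 n g -> Inv g.
Proof.
elim=> [|g1 g2 _ I st]; first exact: Inv_init.
case: g1 g2 / st I => [g1 i o _ _ cu0 onew | g1 i om _ _ | g1 i o q h z phi j _ _] I.
- exact: Inv_invoke.
- exact: Inv_reply.
- exact: Inv_bcast.
Qed.

Lemma conf_prefix_signed g k o : Inv g -> o \in gconf g k -> exists c h z,
  List.In (c, SCom o (index o (gconf g k)).+1 h z) (glog g) /\
  prefix_upto o (gconf g k) = hval_ops h.
Proof.
move=> I oin; rewrite -index_mem in oin.
by have := inv_conf_signed I o oin; rewrite nth_index // -index_mem.
Qed.

Lemma conf_prefix_agree g k k' o : Inv g -> o \in gconf g k -> o \in gconf g k' ->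
  prefix_upto o (gconf g k) = prefix_upto o (gconf g k').
Proof.
move=> I /(conf_prefix_signed I) [c [h [z [H1 ->]]]].
move=> /(conf_prefix_signed I) [c' [h' [z' [H2 ->]]]].
by have [_ _ ->] := inv_commit_uniq I H1 H2.
Qed.

Lemma gcom_client_unique g i i' o l l' : Inv g ->
  (o, l) \in gcom g i -> (o, l') \in gcom g i' -> i = i'.
Proof.
move=> I /(inv_commit_signed I) [h [z H1]] /(inv_commit_signed I) [h' [z' H2]].
by have [-> _ _] := inv_commit_uniq I H1 H2.
Qed.

Lemma gcom_seqno_inj g i o o' l : Inv g ->
  (o, l) \in gcom g i -> (o', l) \in gcom g i -> o = o'.
Proof.
move=> I /(inv_commit_signed I) [h [z /(inv_commit_hash I) [H1 [hp E1] _]]].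
move=> /(inv_commit_signed I) [h' [z' /(inv_commit_hash I) [H2 [hp' E2] _]]].
by move: H1; rewrite H2 E1 E2 => -[_ ->].
Qed.

Lemma IsPi_unique g i p1 p2 : Inv g -> IsPi n g i p1 -> IsPi n g i p2 -> p1 = p2.
Proof.
move=> I [[N1 ->]|[a1 [l1 [k1 [C1 [k1n [A1 [M1 ->]]]]]]]]
          [[N2 ->]|[a2 [l2 [k2 [C2 [k2n [A2 [M2 ->]]]]]]]] //.
- by case: (N1 _ C2); exists k2.
- by case: (N2 _ C1); exists k1.
have El : l1 = l2.
  by apply/eqP; rewrite eqn_leq (M2 _ C1) ?(M1 _ C2) //; [exists k2 | exists k1].
subst l2; have Ea := gcom_seqno_inj I C1 C2; subst a2.
by have := conf_prefix_agree I A1 A2; rewrite /prefix_upto => ->.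
Qed.

Lemma IsPi_prefix_cases g i pi o : Inv g -> IsPi n g i pi -> o \in pi ->
  (exists k, [/\ k < n, o \in gconf g k & prefix_upto o pi = prefix_upto o (gconf g k)])
  \/ (exists l, (o, l) \in gcom g i) /\ ~ conf_by_some n g o.
Proof.
move=> I [[N ->]|[a [l [k [C [kn [A [M ->]]]]]]]].
  move=> /mapP [[o0 l0] xin /= ->]; rewrite mem_sort in xin.
  by right; split; [exists l0 | apply: (N _ xin)].
rewrite mem_cat => /orP [oin|].
  left; exists k; split => //; first exact: mem_take oin.
  by rewrite prefix_upto_cat // prefix_upto_prefix.
move=> /mapP [[o0 l0] xin /= ->].
move: xin; rewrite mem_sort mem_filter /= => /andP [lt xin].
right; split; first by exists l0.
by move=> /(M _ xin) /=; rewrite leqNgt lt.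
Qed.

End Invariant.

Theorem lemma6 (St : Type) (O : eqType) (Rsp : Type)
  (F : St -> O -> St * Rsp) (s0 : St) (n : nat) (g : gstate St O) :
  reach F s0 n g ->
  forall (i j : nat), i < n -> j < n ->
  forall (pi pj : seq O), IsPi n g i pi -> IsPi n g j pj ->
  forall o : O, o \in pi -> o \in pj ->
  prefix_upto o pi = prefix_upto o pj.
Proof.
move=> R i j _ _ pi pj Pi Pj o oi oj.
have I := Inv_reach R.
case: (IsPi_prefix_cases I Pi oi) => [[k [kn A1 E1]]|[[l C1] N1]];
case: (IsPi_prefix_cases I Pj oj) => [[k' [kn' A2 E2]]|[[l' C2] N2]].
- by rewrite E1 E2 (conf_prefix_agree I A1 A2).
- by case: N2; exists k.
- by case: N1; exists k'.
- have Eij := gcom_client_unique I C1 C2; subst j.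
  by rewrite (IsPi_unique I Pi Pj).
Qed.
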